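(* Let $H$ be a regular tournament with $2m+1$ vertices and let $v\in V(H)$. Suppose there is no directed cycle with vertices $p,q,r,s$ in order ($p\to q\to r\to s\to p$) such that $p,r$ are out-neighbours of $v$ and $q,s$ are in-neighbours of $v$. Then $H$ is cyclic.
   Context: A tournament $H$ is regular if all its vertices have the same outdegree and all have the same indegree (so $|V(H)|=2m+1$ and every vertex has in- and outdegree $m$). A tournament $H$ is cyclic if it has an odd number $2m+1$ of vertices and they can be ordered $v_1,\dots,v_{2m+1}$ so that for $1\le i<j\le 2m+1$, $v_i$ is adjacent to $v_j$ (edge $v_i\to v_j$) if and only if $j-i\le m$. *)

From mathcomp Require Import all_boot.
Set Implicit Arguments. Unset Strict Implicit. Unset Printing Implicit Defensive.

Definition tournament (V : finType) (adj : rel V) : Prop :=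
  (forall x, ~~ adj x x) /\
  (forall x y, x != y -> adj x y (+) adj y x) .

Definition outdeg (V : finType) (adj : rel V) (v : V) := #|[set w | adj v w]|.
Definition indeg (V : finType) (adj : rel V) (v : V) := #|[set w | adj w v]|.

Definition regular_tournament (V : finType) (adj : rel V) : Prop :=
  tournament adj /\
  (forall u v, outdeg adj u = outdeg adj v) /\
  (forall u v, indeg adj u = indeg adj v).

Definition cyclic_tournament (V : finType) (adj : rel V) : Prop :=
  exists m : nat, exists f : 'I_(m.*2.+1) -> V,
    bijective f /\
    forall i j : 'I_(m.*2.+1), i < j -> (adj (f i) (f j) = (j - i <= m)).

From mathcomp Require Import all_boot zify.
Set Implicit Arguments. Unset Strict Implicit. Unset Printing Implicit Defensive.

(* Let A and B be the out- and in-neighbourhoods of v; both have m vertices.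
   A forbidden 4-cycle is exactly a pair a, a' in A whose out-neighbourhoods in
   B are incomparable, so these out-neighbourhoods form a chain.  Let n(a) be
   the out-degree of a into B; regularity gives n(a) = d^-_A(a) + 1.  Counting
   the edges from A into the out-neighbourhood of a0 in two ways shows
   n(a0) <= l + 1, where l is the number of a in A with n(a) < n(a0), with
   equality only if no other vertex of A beats one of these l vertices.
   Summing over A, n is a bijection of A onto {1, ..., m} that orders A
   transitively, and a -> b (a in A, b in B) iff n(a) + c(b) > m, where c(b)
   is the in-degree of b from A.  The converse tournament orders B by c, and
   placing v at 0, a at n(a) and b at 2m + 1 - c(b) shows that H is cyclic. *)


Lemma sum_nat_bool (T : finType) (S : {pred T}) (P : pred T) :
  \sum_(x in S) P x = #|[set x in S | P x]|.
Proof.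
rewrite -sum1_card big_mkcond [RHS]big_mkcond /=.
by apply: eq_bigr => x _; rewrite inE; case: (x \in S); case: (P x).
Qed.

Lemma eq_sum_leq (I : finType) (S : {pred I}) (F G : I -> nat) :
  {in S, forall i, F i <= G i} ->
  \sum_(i in S) G i <= \sum_(i in S) F i -> {in S, F =1 G}.
Proof.
move=> leFG leGF i Si.
have [_] := leqif_sum (fun j Sj => leqif_eq (leFG j Sj)).
rewrite eqn_leq leGF andbT leq_sum // => /esym /forall_inP /(_ i Si).
by move/eqP.
Qed.

Lemma leq_sum_subset (T : finType) (S S' : {set T}) (F : T -> nat) :
  S \subset S' -> \sum_(x in S) F x <= \sum_(x in S') F x.
Proof.
move=> sSS'; rewrite [X in _ <= X](big_setID S) /= (setIidPr sSS').
exact: leq_addr.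
Qed.

Lemma card_setI_nested (T : finType) (X Y : {set T}) :
  (X \subset Y) || (Y \subset X) -> #|X :&: Y| = minn #|X| #|Y|.
Proof.
case/orP=> sub.
  by rewrite (setIidPl sub); apply/esym/minn_idPl/subset_leq_card.
by rewrite (setIidPr sub); apply/esym/minn_idPr/subset_leq_card.
Qed.

Lemma sum_neq (T : finType) (S : {set T}) x :
  x \in S -> \sum_(y in S) (x != y) = #|S| - 1.
Proof.
move=> xS; rewrite sum_nat_bool (cardsD1 x S) xS add1n subn1 /=.
by apply: eq_card => y; rewrite !inE eq_sym andbC.
Qed.

Section Tournament.
Variables (V : finType) (adj : rel V).

Definition outdeg_in (S : {set V}) x := \sum_(y in S) adj x y.
Definition indeg_in (S : {set V}) x := \sum_(y in S) adj y x.

Lemma outdegE x : outdeg adj x = outdeg_in [set: V] x.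
Proof. by rewrite /outdeg_in sum_nat_bool; apply: eq_card => y; rewrite !inE. Qed.

Lemma indegE x : indeg adj x = indeg_in [set: V] x.
Proof. by rewrite /indeg_in sum_nat_bool; apply: eq_card => y; rewrite !inE. Qed.

Hypothesis tour : tournament adj.

Lemma add_adj_sym x y : adj x y + adj y x = (x != y).
Proof.
case: tour => irr tot; case: (eqVneq x y) => [->|/tot]; first by rewrite (negbTE (irr y)).
by case: (adj x y) (adj y x) => -[].
Qed.

Lemma adj_asym x y : adj x y -> ~~ adj y x.
Proof. by have := add_adj_sym x y; case: (adj x y) (adj y x) (x != y) => -[] -[]. Qed.

Lemma adj_neq x y : adj x y -> x != y.
Proof. by have := add_adj_sym x y; case: (adj x y) (adj y x) (x != y) => -[] -[]. Qed.

Lemma adj_total x y : x != y -> ~~ adj x y -> adj y x.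
Proof. by have := add_adj_sym x y; case: (adj x y) (adj y x) (x != y) => -[] -[]. Qed.

Lemma outdeg_in_add_indeg_in (S : {set V}) x :
  x \in S -> outdeg_in S x + indeg_in S x = #|S| - 1.
Proof.
move=> xS; rewrite -big_split -(sum_neq xS).
by apply: eq_bigr => y _; apply: add_adj_sym.
Qed.

Lemma sum_indeg_in (S : {set V}) : 2 * \sum_(x in S) indeg_in S x = #|S| * (#|S| - 1).
Proof.
have E : \sum_(x in S) (outdeg_in S x + indeg_in S x) = #|S| * (#|S| - 1).
  by rewrite -sum_nat_const; apply: eq_bigr => x; apply: outdeg_in_add_indeg_in.
by rewrite big_split /= /outdeg_in exchange_big /= in E; rewrite -E /indeg_in; lia.
Qed.

Lemma leq_indeg_in (S S' : {set V}) x : S \subset S' -> indeg_in S x <= indeg_in S' x.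
Proof. exact: leq_sum_subset. Qed.

End Tournament.

Lemma tournament_converse (V : finType) (adj : rel V) :
  tournament adj -> tournament (fun x y => adj y x).
Proof. by case=> irr tot; split=> // x y /tot; rewrite addbC. Qed.

Lemma regular_tournament_deg (V : finType) (adj : rel V) m :
  regular_tournament adj -> #|V| = m.*2.+1 ->
  forall x, outdeg adj x = m /\ indeg adj x = m.
Proof.
move=> [tour [outC inC]] cardV x.
have deg2 : outdeg adj x + indeg adj x = m.*2.
  by rewrite outdegE indegE (outdeg_in_add_indeg_in tour) ?in_setT // cardsT cardV subn1.
have sum_deg : \sum_(y in [set: V]) outdeg adj x = \sum_(y in [set: V]) indeg adj x.
  rewrite (eq_bigr _ (fun y _ => outC x y)) (eq_bigr _ (fun y _ => inC x y)).
  under eq_bigr do rewrite outdegE; under [RHS]eq_bigr do rewrite indegE.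
  exact: exchange_big.
move: sum_deg; rewrite !sum_nat_const cardsT cardV => /eqP; rewrite eqn_pmul2l //.
by move/eqP => eqdeg; move: deg2; rewrite eqdeg; lia.
Qed.

Lemma sum_card_lt (T : finType) (S : {set T}) (f : T -> nat) :
  2 * \sum_(x in S) #|[set y in S | f y < f x]| =
  \sum_(x in S) \sum_(y in S) ((f y < f x) + (f x < f y)).
Proof.
under eq_bigr do rewrite -sum_nat_bool.
under [RHS]eq_bigr do rewrite big_split.
by rewrite big_split /= [X in _ = _ + X]exchange_big mul2n -addnn.
Qed.

Lemma lt_add_gt_le_neq (T : eqType) (f : T -> nat) x y :
  (f y < f x) + (f x < f y) <= (x != y).
Proof. by case: (eqVneq x y) => [->|_]; rewrite ?ltnn //; case: ltngtP. Qed.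

Lemma leq_sum_card_lt (T : finType) (S : {set T}) (f : T -> nat) :
  2 * \sum_(x in S) #|[set y in S | f y < f x]| <= #|S| * (#|S| - 1).
Proof.
rewrite sum_card_lt -sum_nat_const; apply: leq_sum => x xS.
by rewrite -(sum_neq xS); apply: leq_sum => y _; apply: lt_add_gt_le_neq.
Qed.

Lemma sum_card_lt_inj (T : finType) (S : {set T}) (f : T -> nat) :
  2 * \sum_(x in S) #|[set y in S | f y < f x]| = #|S| * (#|S| - 1) ->
  {in S &, injective f}.
Proof.
rewrite sum_card_lt => eqS x y xS yS fxy.
have row_eq : forall x', x' \in S ->
    \sum_(y' in S) ((f y' < f x') + (f x' < f y')) = \sum_(y' in S) (x' != y').
  apply: eq_sum_leq => [x'' _|]; first by apply: leq_sum => y' _; apply: lt_add_gt_le_neq.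
  rewrite eqS -sum_nat_const; apply: eq_leq; apply: eq_bigr => x'' x''S.
  by rewrite sum_neq.
have := eq_sum_leq (fun y' _ => lt_add_gt_le_neq f x y') (eq_leq (esym (row_eq x xS))) yS.
by rewrite fxy ltnn; case: eqP.
Qed.

Section AlternatingCycleFree.
Variables (V : finType) (adj : rel V) (m : nat) (v : V).
Hypothesis tour : tournament adj.
Hypothesis outdeg_m : forall x, outdeg adj x = m.
Hypothesis indeg_m : forall x, indeg adj x = m.

Local Notation A := [set w | adj v w].
Local Notation B := [set w | adj w v].

Hypothesis no_alt_cycle : forall p q r s,
  p \in A -> q \in B -> r \in A -> s \in B ->
  adj p q -> adj q r -> adj r s -> adj s p -> False.

Lemma sum_split_v (F : V -> nat) :
  \sum_(w in [set: V]) F w = F v + \sum_(w in A) F w + \sum_(w in B) F w.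
Proof.
rewrite (bigD1 v) ?in_setT //= (bigID (adj v)) /= -addnA; congr (_ + (_ + _)).
  apply: eq_bigl => w; rewrite !inE /=.
  by case vw: (adj v w); rewrite ?andbF // eq_sym (adj_neq tour vw).
apply: eq_bigl => w; rewrite !inE /=; apply/andP/idP => [[wv vw]|wv].
  by apply: (adj_total tour) vw; rewrite eq_sym.
by rewrite (adj_neq tour wv) (adj_asym tour wv).
Qed.

Lemma adj_B_A a b : a \in A -> b \in B -> ~~ adj a b -> adj b a.
Proof.
rewrite !inE => va bv nab; apply: (adj_total tour) nab.
by apply: contraTneq va => ->; apply: (adj_asym tour).
Qed.

Lemma card_A : #|A| = m. Proof. exact: outdeg_m. Qed.
Lemma card_B : #|B| = m. Proof. exact: indeg_m. Qed.

Definition out_B a := outdeg_in adj B a.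
Definition in_A b := indeg_in adj A b.
Definition out_nbhd_B a := [set b in B | adj a b].
Definition below a := [set a' in A | out_B a' < out_B a].

Lemma out_B_indeg_A a : a \in A -> out_B a = indeg_in adj A a + 1.
Proof.
move=> aA; have := outdeg_m a; rewrite outdegE /outdeg_in sum_split_v.
have /negbTE -> : ~~ adj a v by apply: (adj_asym tour); rewrite inE in aA.
have A_gt0 : 0 < #|A| by apply/card_gt0P; exists a.
have := outdeg_in_add_indeg_in tour aA.
by rewrite card_A in A_gt0 *; rewrite /out_B /outdeg_in; lia.
Qed.

Lemma in_A_add_indeg_B b : b \in B -> in_A b + indeg_in adj B b = m.
Proof.
move=> bB; have := indeg_m b; rewrite indegE /indeg_in sum_split_v.
have /negbTE -> : ~~ adj v b by apply: (adj_asym tour); rewrite inE in bB.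
by rewrite /in_A /indeg_in add0n.
Qed.

Lemma card_out_nbhd_B a : #|out_nbhd_B a| = out_B a.
Proof. by rewrite /out_B /outdeg_in sum_nat_bool. Qed.

Lemma out_nbhd_B_nested a a' : a \in A -> a' \in A ->
  (out_nbhd_B a \subset out_nbhd_B a') || (out_nbhd_B a' \subset out_nbhd_B a).
Proof.
move=> aA a'A; case: (boolP (_ \subset _)) => //= /subsetPn [b1].
rewrite inE => /andP [b1B ab1]; rewrite inE b1B /= => na'b1.
apply/subsetP => b2; rewrite inE => /andP [b2B a'b2]; rewrite inE b2B /=.
apply/negPn/negP => nab2.
exact: (no_alt_cycle aA b1B a'A b2B ab1 (adj_B_A a'A b1B na'b1) a'b2 (adj_B_A aA b2B nab2)).
Qed.

Lemma out_nbhd_B_mono a a' : a \in A -> a' \in A -> out_B a <= out_B a' ->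
  out_nbhd_B a \subset out_nbhd_B a'.
Proof.
move=> aA a'A le_aa'; case/orP: (out_nbhd_B_nested aA a'A) => // sub.
have /eqP -> // : out_nbhd_B a' == out_nbhd_B a.
by rewrite eqEcard sub !card_out_nbhd_B.
Qed.

Lemma below_sub a : below a \subset A.
Proof. by apply/subsetP => a' /setIdP []. Qed.

Lemma sum_in_A_out_nbhd a0 : a0 \in A ->
  \sum_(b in out_nbhd_B a0) in_A b =
  \sum_(a in below a0) out_B a + out_B a0 * (m - #|below a0|).
Proof.
move=> a0A.
have -> : \sum_(b in out_nbhd_B a0) in_A b =
          \sum_(a in A) #|out_nbhd_B a :&: out_nbhd_B a0|.
  rewrite /in_A /indeg_in exchange_big; apply: eq_bigr => a _.
  rewrite sum_nat_bool; apply: eq_card => b; rewrite !inE.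
  by case: (adj b v) (adj a0 b) (adj a b) => -[] -[].
(* Nestedness turns each intersection into a minimum. *)
rewrite (eq_bigr (fun a => if out_B a < out_B a0 then out_B a else out_B a0)); last first.
  by move=> a aA; rewrite card_setI_nested ?out_nbhd_B_nested // !card_out_nbhd_B.
rewrite (bigID (fun a => out_B a < out_B a0)) /=; congr (_ + _).
  by apply: eq_big => [a|a /andP [_ ->]]; rewrite ?inE.
rewrite (eq_bigr (fun=> out_B a0)); last by move=> a /andP [_ /negbTE ->].
rewrite sum_nat_cond_const mulnC -card_A -(cardsDS (below_sub a0)); congr (_ * _).
by apply: eq_card => a; rewrite !inE; case: (adj v a); rewrite ?andbT.
Qed.

Lemma leq_sum_in_A (T : {set V}) : T \subset B ->
  2 * \sum_(b in T) in_A b + #|T| * (#|T| - 1) <= 2 * (#|T| * m).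
Proof.
move=> TB; rewrite -(sum_indeg_in tour) -mulnDr leq_mul2l -big_split -sum_nat_const /=.
apply: leq_sum => b bT.
rewrite -(in_A_add_indeg_B (subsetP TB b bT)) leq_add2l.
exact: leq_indeg_in.
Qed.

Lemma sum_out_B (L : {set V}) : L \subset A ->
  \sum_(a in L) out_B a = \sum_(a in L) indeg_in adj A a + #|L|.
Proof.
move=> LA; rewrite -sum1_card -big_split; apply: eq_bigr => a aL.
exact: out_B_indeg_A (subsetP LA a aL).
Qed.

Lemma below_bound a0 : a0 \in A ->
  out_B a0 <= #|below a0| + 1 /\
  (out_B a0 = #|below a0| + 1 ->
   \sum_(a in below a0) indeg_in adj A a <= \sum_(a in below a0) indeg_in adj (below a0) a).
Proof.
move=> a0A.
have sub_B : out_nbhd_B a0 \subset B by apply/subsetP => b /setIdP [].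
have := leq_sum_in_A sub_B; rewrite card_out_nbhd_B (sum_in_A_out_nbhd a0A).
rewrite (sum_out_B (below_sub a0)).
have := sum_indeg_in tour (below a0).
have : \sum_(a in below a0) indeg_in adj (below a0) a <= \sum_(a in below a0) indeg_in adj A a.
  by apply: leq_sum => a _; apply: leq_indeg_in; apply: below_sub.
have : #|below a0| <= m by rewrite -card_A; apply: subset_leq_card; apply: below_sub.
set x := out_B a0; set l := #|below a0|.
move=> lm D0_le sum_D0 bound.
(* With the other estimates, [bound] forces [(x - l) ^ 2 <= x - l]. *)
split; first by nia.
by move=> xl; rewrite xl in bound; nia.
Qed.

Lemma below_closed a0 a a' : a0 \in A -> out_B a0 = #|below a0| + 1 ->
  a \in below a0 -> a' \in A -> adj a' a -> a' \in below a0.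
Proof.
move=> a0A /(below_bound a0A).2 le_sum aL a'A a'a; apply: contraTT a'a => a'L.
have := eq_sum_leq (fun a _ => leq_indeg_in adj a (below_sub a0)) le_sum aL.
rewrite /indeg_in [\sum_(y in A) _](big_setID (below a0)) /= (setIidPr (below_sub a0)).
move=> /esym /eqP; rewrite -[X in _ == X]addn0 eqn_add2l sum_nat_eq0.
by move=> /forall_inP /(_ a'); rewrite in_setD a'L a'A => /(_ isT); case: (adj a' a).
Qed.

Lemma sum_out_B_A : 2 * \sum_(a in A) out_B a = m * m.+1.
Proof.
rewrite (sum_out_B (subxx A)) mulnDr (sum_indeg_in tour) card_A; nia.
Qed.

Lemma out_B_rank : {in A, forall a, out_B a = #|below a| + 1}.
Proof.
apply: eq_sum_leq => [a /below_bound [] //|].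
have := leq_sum_card_lt A out_B; have := sum_out_B_A.
by rewrite big_split sum1_card card_A /below /=; nia.
Qed.

Lemma out_B_inj : {in A &, injective out_B}.
Proof.
apply: sum_card_lt_inj; rewrite card_A.
have := sum_out_B_A; rewrite (eq_bigr _ out_B_rank) big_split sum1_card card_A /=.
by rewrite /below; nia.
Qed.

Lemma out_B_range a : a \in A -> 0 < out_B a <= m.
Proof.
move=> aA; apply/andP; split; first by rewrite (out_B_rank aA) addn1.
by rewrite -card_B -card_out_nbhd_B; apply/subset_leq_card/subsetP => b /setIdP [].
Qed.

Lemma adj_A_lt a a' : a \in A -> a' \in A -> out_B a < out_B a' -> adj a a'.
Proof.
move=> aA a'A lt; apply: (adj_total tour); first by apply: contraTneq lt => ->; rewrite ltnn.
apply/negP => a'a; have aL : a \in below a' by rewrite inE aA.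
by have := below_closed a'A (out_B_rank a'A) aL a'A a'a; rewrite inE ltnn andbF.
Qed.

Lemma card_above a : a \in A -> #|[set a' in A | out_B a < out_B a']| = m - out_B a.
Proof.
move=> aA; have /andP [a_gt0 _] := out_B_range aA.
have : \sum_(a' in A) ((out_B a' < out_B a) + (out_B a < out_B a')) = m - 1.
  rewrite -card_A -(sum_neq aA); apply: eq_bigr => a' a'A.
  case: (eqVneq a a') => [<-|ne]; first by rewrite ltnn.
  have : out_B a != out_B a' by apply: contraNneq ne => /(out_B_inj aA a'A)->.
  by case: ltngtP.
by rewrite big_split !sum_nat_bool /= -/(below a) (out_B_rank aA) in a_gt0 *; lia.
Qed.

Lemma adj_A_B a b : a \in A -> b \in B -> adj a b = (m < in_A b + out_B a).
Proof.
move=> aA bB; have /andP [a_gt0 am] := out_B_range aA.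
have -> : in_A b = #|[set a' in A | adj a' b]| by rewrite /in_A /indeg_in sum_nat_bool.
case ab: (adj a b); apply/esym.
  have : A :\: below a \subset [set a' in A | adj a' b].
    apply/subsetP => a' /setDP [a'A]; rewrite [a' \in below a]inE a'A /= -leqNgt => le.
    apply/setIdP; split => //.
    have /subsetP /(_ b) := out_nbhd_B_mono aA a'A le.
    by case/(_ _)/setIdP => //; apply/setIdP.
  move/subset_leq_card; rewrite cardsDS ?below_sub // card_A.
  by have := out_B_rank aA; lia.
have : [set a' in A | adj a' b] \subset [set a' in A | out_B a < out_B a'].
  apply/subsetP => a' /setIdP [a'A a'b]; apply/setIdP; split => //.
  rewrite ltnNge; apply/negP => le.
  have /subsetP /(_ b) := out_nbhd_B_mono a'A aA le.
  by case/(_ _)/setIdP => [|_]; [apply/setIdP | rewrite ab].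
by move/subset_leq_card; rewrite card_above //; lia.
Qed.

End AlternatingCycleFree.

Section CyclicOrder.
Variables (V : finType) (adj : rel V) (m : nat) (v : V).
Hypothesis tour : tournament adj.
Hypothesis outdeg_m : forall x, outdeg adj x = m.
Hypothesis indeg_m : forall x, indeg adj x = m.

Local Notation A := [set w | adj v w].
Local Notation B := [set w | adj w v].
Local Notation conv := (fun x y => adj y x).

Hypothesis no_alt_cycle : forall p q r s,
  p \in A -> q \in B -> r \in A -> s \in B ->
  adj p q -> adj q r -> adj r s -> adj s p -> False.

Lemma no_alt_cycle_converse p q r s :
  p \in B -> q \in A -> r \in B -> s \in A ->
  conv p q -> conv q r -> conv r s -> conv s p -> False.
Proof. by move=> pB qA rB sA qp rq sr ps; apply: (no_alt_cycle qA pB sA rB). Qed.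

Let tour_conv := tournament_converse tour.

Lemma in_A_range b : b \in B -> 0 < in_A adj v b <= m.
Proof. exact: out_B_range tour_conv indeg_m outdeg_m no_alt_cycle_converse b. Qed.

Lemma in_A_inj : {in B &, injective (in_A adj v)}.
Proof. exact: out_B_inj tour_conv indeg_m outdeg_m no_alt_cycle_converse. Qed.

Lemma adj_B_gt b b' : b \in B -> b' \in B -> in_A adj v b < in_A adj v b' -> adj b' b.
Proof. exact: adj_A_lt tour_conv indeg_m outdeg_m no_alt_cycle_converse b b'. Qed.

Definition cyclic_pos w :=
  if w == v then 0 else if adj v w then out_B adj v w else m.*2.+1 - in_A adj v w.

Lemma cyclic_posP w :
  [\/ w = v /\ cyclic_pos w = 0,
      w \in A /\ cyclic_pos w = out_B adj v w
    | w \in B /\ cyclic_pos w = m.*2.+1 - in_A adj v w].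
Proof.
rewrite /cyclic_pos; case: (eqVneq w v) => [->|wv]; first by constructor 1.
case vw: (adj v w); first by constructor 2; rewrite inE.
constructor 3; split=> //; rewrite inE (adj_total tour) // ?vw //.
by rewrite eq_sym.
Qed.

Let out_B_bounds := out_B_range tour outdeg_m indeg_m no_alt_cycle.

Lemma cyclic_pos_lt w : cyclic_pos w < m.*2.+1.
Proof.
case: (cyclic_posP w) => [[_ ->] | [/out_B_bounds + ->] | [/in_A_range + ->]] //; lia.
Qed.

Ltac cyclic_pos_cases x y :=
  case: (cyclic_posP x) => [[-> ->] | [xA ->] | [xB ->]];
  case: (cyclic_posP y) => [[-> ->] | [yA ->] | [yB ->]] //;
  try have := out_B_bounds xA; try have := out_B_bounds yA;
  try have := in_A_range xB; try have := in_A_range yB.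

Lemma cyclic_pos_inj : injective cyclic_pos.
Proof.
move=> x y; cyclic_pos_cases x y; try lia.
  by move=> _ _; apply: (out_B_inj tour outdeg_m indeg_m no_alt_cycle xA yA).
by move=> ry rx eq_pos; apply: in_A_inj => //; lia.
Qed.

Lemma cyclic_pos_adj x y :
  cyclic_pos x < cyclic_pos y -> adj x y = (cyclic_pos y - cyclic_pos x <= m).
Proof.
cyclic_pos_cases x y; try lia.
- by rewrite inE in yA; rewrite yA; lia.
- by rewrite inE in yB; rewrite (negbTE (adj_asym tour yB)) => *; apply/esym/negbTE; lia.
- by move=> ry rx lt; rewrite (adj_A_lt tour outdeg_m indeg_m no_alt_cycle xA yA lt); lia.
- by rewrite (adj_A_B tour outdeg_m indeg_m no_alt_cycle xA yB); move=> *; apply/idP/idP; lia.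
by move=> ry rx lt; rewrite (adj_B_gt yB xB); lia.
Qed.

End CyclicOrder.

Lemma cyclic_tournament_of_positions (V : finType) (adj : rel V) m (pos : V -> nat) :
  #|V| = m.*2.+1 -> injective pos -> (forall w, pos w < m.*2.+1) ->
  (forall x y, pos x < pos y -> adj x y = (pos y - pos x <= m)) ->
  cyclic_tournament adj.
Proof.
move=> cardV pos_inj pos_lt pos_adj.
pose g w : 'I_(m.*2.+1) := Ordinal (pos_lt w).
have g_inj : injective g by move=> x y /(congr1 val) /pos_inj.
have [f gK fK] : bijective g by apply: inj_card_bij => //; rewrite card_ord cardV.
have pos_f i : pos (f i) = i by rewrite -[RHS](congr1 val (fK i)).
exists m, f; split; first by exists g.
by move=> i j lt_ij; rewrite pos_adj !pos_f.
Qed.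

Theorem theorem3p8 (V : finType) (adj : rel V) (m : nat) (v : V) :
  regular_tournament adj ->
  #|V| = m.*2.+1 ->
  ~ (exists p q r s : V,
       [&& adj p q, adj q r, adj r s, adj s p,
           p != r, q != s,
           adj v p, adj v r, adj q v & adj s v]) ->
  cyclic_tournament adj.
Proof.
move=> reg cardV no_cycle.
have tour := reg.1; have deg := regular_tournament_deg reg cardV.
have outdeg_m x : outdeg adj x = m by case: (deg x).
have indeg_m x : indeg adj x = m by case: (deg x).
have no_alt_cycle p q r s : p \in [set w | adj v w] -> q \in [set w | adj w v] ->
    r \in [set w | adj v w] -> s \in [set w | adj w v] ->
    adj p q -> adj q r -> adj r s -> adj s p -> False.
  rewrite !inE => vp qv vr sv pq qr rs sp; apply: no_cycle; exists p, q, r, s.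
  rewrite pq qr rs sp vp vr qv sv !andbT /=; apply/andP; split.
    by apply: contraTneq qr => <-; apply: (adj_asym tour).
  by apply: contraTneq rs => <-; apply: (adj_asym tour).
apply: (cyclic_tournament_of_positions cardV
          (cyclic_pos_inj tour outdeg_m indeg_m no_alt_cycle)).
  exact: cyclic_pos_lt tour outdeg_m indeg_m no_alt_cycle.
exact: cyclic_pos_adj tour outdeg_m indeg_m no_alt_cycle.
Qed.
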